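(* Let $1<\gamma\le 15/14$. Let $\mathrm{ALG}$ be a deterministic online list update algorithm with advice such that $\mathrm{ALG}(\sigma)\le\gamma\cdot\mathrm{OPT}(\sigma)$ for every request sequence $\sigma$ (full cost model). Then on inputs of size $n$ (already for a list of two items), $\mathrm{ALG}$ needs to read at least $$\frac{n}{5}\Bigl(1+(7\gamma-7)\log_2(7\gamma-7)+(8-7\gamma)\log_2(8-7\gamma)\Bigr)$$ bits of advice on some input.
   Context: Static list update problem: a list of $l$ distinct items in some initial order; a request sequence $\sigma$ of items is served online in order. Serving a request to the item at position $i$ (from the front) costs $i$ (full cost model). Immediately after an access, the accessed item may be moved closer to the front at no cost (free exchange); at any time two adjacent items may be swapped at cost $1$ (paid exchange). $A(\sigma)$ is the total cost of algorithm $A$ on $\sigma$ and $\mathrm{OPT}(\sigma)$ the minimum cost of any offline algorithm on $\sigma$ from the same initial list. Advice model: before serving, an oracle knowing all of $\sigma$ writes an infinite binary advice tape; the online algorithm may read tape bits at any time, and the number of advice bits read is the length of the shortest prefix of the tape containing all accessed bits. *)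

From Stdlib Require Import Reals List Arith Lia Classical ClassicalEpsilon Wf_nat.
Import ListNotations.

(* 0-based position of x in the list s; the access cost (full cost model) is
   pos x s + 1. *)
Fixpoint pos (x : bool) (s : list bool) : nat :=
  match s with
  | [] => 0
  | y :: s' => if Bool.eqb x y then 0 else S (pos x s')
  end.

(* paid exchange: swap the adjacent items at 0-based positions i and i+1
   (no effect if out of range) *)
Fixpoint swap_at (i : nat) (s : list bool) : list bool :=
  match i, s with
  | 0, x :: y :: t => y :: x :: t
  | S i', x :: t => x :: swap_at i' t
  | _, _ => s
  end.

Fixpoint rem1 (x : bool) (s : list bool) : list bool :=
  match s with
  | [] => []
  | y :: s' => if Bool.eqb x y then s' else y :: rem1 x s'
  end.

(* free exchange: move the (just accessed) item x forward by d positions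
   (to the front if d exceeds its position) *)
Definition move_fwd (x : bool) (d : nat) (s : list bool) : list bool :=
  let j := pos x s - d in
  firstn j (rem1 x s) ++ x :: skipn j (rem1 x s).

(* What an algorithm does when serving one request: a sequence of paid
   exchanges performed before the access, then the access, then a free
   move of the accessed item towards the front by [free] positions. *)
Record action := mkAction { paid : list nat; free : nat }.

Definition no_action : action := mkAction [] 0.

Definition serve_step (s : list bool) (a : action) (x : bool) : nat * list bool :=
  let s1 := fold_left (fun l i => swap_at i l) (paid a) s in
  (length (paid a) + S (pos x s1), move_fwd x (free a) s1).

Fixpoint cost (s : list bool) (acts : list action) (sigma : list bool) : nat :=
  match sigma with
  | [] => 0
  | x :: sigma' =>
      let a := hd no_action acts in
      let (c, s') := serve_step s a x in
      c + cost s' (tl acts) sigma'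
  end.

Definition init_list : list bool := [false; true].

Definition achievable (s : list bool) (sigma : list bool) (c : nat) : Prop :=
  exists acts, cost s acts sigma = c.

Lemma opt_exists (s sigma : list bool) :
  exists c, achievable s sigma c /\ forall c', achievable s sigma c' -> c <= c'.
Proof.
  destruct (dec_inh_nat_subset_has_unique_least_element (achievable s sigma))
    as [c [[Hc Hmin] _]].
  - intro n; apply classic.
  - exists (cost s [] sigma); exists []; reflexivity.
  - exists c; split; assumption.
Qed.

Definition OPT (s sigma : list bool) : nat :=
  proj1_sig (constructive_indefinite_description _ (opt_exists s sigma)).

(* An online algorithm with
   advice is a function [alg tape prefix] giving the action used to serve the
   last request of [prefix] (the requests revealed so far): the action may
   depend only on the advice tape and the requests seen so far. *)
Definition tape := nat -> bool.
Definition online_alg := tape -> list bool -> action.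

Definition alg_actions (alg : online_alg) (t : tape) (sigma : list bool) : list action :=
  map (fun i => alg t (firstn (S i) sigma)) (seq 0 (length sigma)).

Definition ALG_cost (alg : online_alg) (t : tape) (sigma : list bool) : nat :=
  cost init_list (alg_actions alg t sigma) sigma.

Definition reads_at_most (alg : online_alg) (t : tape) (sigma : list bool) (k : nat) : Prop :=
  forall t' : tape, (forall i, i < k -> t' i = t i) ->
    alg_actions alg t' sigma = alg_actions alg t sigma.

Definition log2 (x : R) : R := (ln x / ln 2)%R.

From Stdlib Require Import Reals List Arith Lia Lra Classical ClassicalEpsilon.
Import ListNotations.

(* Split the requests into blocks of five, [block true] = TTTFF and
   [block false] = TFFTF (T = [true], F = [false]).  OPT serves either block at
   cost 7 and ends with the initial list.  With a potential of 1 on the list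
   [false; true], an online algorithm pays amortized cost at least 7 on each
   block, and since it serves the common first request T before knowing the
   block, at least 8 on one of the two: call that block an error.  If ALG is
   gamma-competitive, it makes at most p m errors on m blocks, p = 7 gamma - 7.
   Weight a block sequence by p per error and 1 - p per other block: for fixed
   advice the weights of all 2^m sequences add up to at most 1 (p <= 1/2), while
   each sequence gets weight at least 2^(-m H(p)) under its own advice.  Hence
   2^K >= 2^(m (1 - H(p))) for K advice bits. *)

(** * Weighted counting of block sequences *)

Fixpoint bool_lists (m : nat) : list (list bool) :=
  match m with
  | O => [[]]
  | S m => map (cons false) (bool_lists m) ++ map (cons true) (bool_lists m)
  end.

Lemma in_bool_lists_length m w : In w (bool_lists m) -> length w = m.
Proof.
  revert w; induction m as [|m IH]; intros w Hw; simpl in Hw.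
  - destruct Hw as [<-|[]]; reflexivity.
  - apply in_app_or in Hw.
    destruct Hw as [Hw|Hw]; apply in_map_iff in Hw; destruct Hw as [w' [<- Hw']];
      simpl; f_equal; apply IH, Hw'.
Qed.

Lemma bool_lists_complete w m : length w = m -> In w (bool_lists m).
Proof.
  intros <-. induction w as [|b w IH]; simpl; [now left|].
  apply in_or_app. destruct b; [right|left]; apply in_map, IH.
Qed.

Lemma length_bool_lists m : length (bool_lists m) = 2 ^ m.
Proof.
  induction m as [|m IH]; simpl; [reflexivity|].
  rewrite length_app, !length_map, IH. lia.
Qed.

Lemma bool_lists_nonnil m : bool_lists m <> [].
Proof.
  intros E. apply (in_nil (a := repeat false m)). rewrite <- E.
  apply bool_lists_complete, repeat_length.
Qed.

Lemma uniform_bound {T : Type} (P : T -> nat -> Prop) (B : R) (l : list T) :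
  l <> [] ->
  (forall x k k', k <= k' -> P x k -> P x k') ->
  (forall x, In x l -> exists k, P x k /\ (INR k < B)%R) ->
  exists K, (INR K < B)%R /\ forall x, In x l -> P x K.
Proof.
  intros Hne Hmono. induction l as [|x l IH]; intros Hl; [congruence|].
  destruct (Hl x (or_introl eq_refl)) as [k [Hk HkB]].
  destruct l as [|y l].
  - exists k. split; [exact HkB | intros z [<-|[]]; exact Hk].
  - destruct IH as [K [HKB HK]];
      [discriminate | intros z Hz; apply Hl; now right |].
    exists (Nat.max k K). split.
    + now destruct (Nat.max_spec k K) as [[_ ->]|[_ ->]].
    + intros z [<-|Hz].
      * apply (Hmono x k); [lia | exact Hk].
      * apply (Hmono z K); [lia | apply HK, Hz].
Qed.

Open Scope R_scope.

Definition sumR (l : list R) : R := fold_right Rplus 0 l.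

Lemma sumR_app l1 l2 : sumR (l1 ++ l2) = sumR l1 + sumR l2.
Proof. induction l1 as [|a l1 IH]; simpl; [ring|]. unfold sumR in *; simpl. rewrite IH. ring. Qed.

Section ListSums.
Context {T : Type}.

Lemma sumR_map_const (c : R) (l : list T) : sumR (map (fun _ => c) l) = INR (length l) * c.
Proof.
  induction l as [|a l IH]; unfold sumR in *; cbn [map fold_right length]; [simpl; ring|].
  rewrite IH, S_INR. ring.
Qed.

Lemma sumR_map_scal (c : R) (g : T -> R) l :
  sumR (map (fun x => c * g x) l) = c * sumR (map g l).
Proof. induction l as [|a l IH]; unfold sumR in *; simpl; [ring|]. rewrite IH. ring. Qed.

Lemma sumR_map_add (g h : T -> R) l :
  sumR (map (fun x => g x + h x) l) = sumR (map g l) + sumR (map h l).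
Proof. induction l as [|a l IH]; unfold sumR in *; simpl; [ring|]. rewrite IH. ring. Qed.

Lemma sumR_map_nonneg (g : T -> R) l : (forall x, 0 <= g x) -> 0 <= sumR (map g l).
Proof.
  intros Hg. induction l as [|a l IH]; unfold sumR in *; simpl; [lra|].
  specialize (Hg a). lra.
Qed.

Lemma sumR_map_le (g h : T -> R) l :
  (forall x, In x l -> g x <= h x) -> sumR (map g l) <= sumR (map h l).
Proof.
  intros Hgh. induction l as [|a l IH]; unfold sumR in *; simpl; [lra|].
  apply Rplus_le_compat; [apply Hgh; now left | apply IH; intros; apply Hgh; now right].
Qed.

Lemma sumR_map_ge_elem (g : T -> R) l x :
  (forall y, 0 <= g y) -> In x l -> g x <= sumR (map g l).
Proof.
  intros Hg Hx. induction l as [|a l IH]; [destruct Hx|].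
  pose proof (sumR_map_nonneg g l Hg). specialize (Hg a).
  destruct Hx as [<-|Hx]; unfold sumR in *; simpl; [lra|].
  specialize (IH Hx). lra.
Qed.

End ListSums.

Lemma sumR_map_swap {T U : Type} (g : T -> U -> R) (l1 : list T) (l2 : list U) :
  sumR (map (fun x => sumR (map (g x) l2)) l1)
  = sumR (map (fun y => sumR (map (fun x => g x y) l1)) l2).
Proof.
  induction l1 as [|a l1 IH]; simpl.
  - induction l2 as [|b l2 IH]; unfold sumR in *; simpl; [reflexivity|]. rewrite <- IH. ring.
  - change (sumR (map (g a) l2) + sumR (map (fun x => sumR (map (g x) l2)) l1)
            = sumR (map (fun y => g a y + sumR (map (fun x => g x y) l1)) l2)).
    rewrite IH, (sumR_map_add (g a) (fun y => sumR (map (fun x => g x y) l1))).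
    reflexivity.
Qed.

Section Weighting.
Context {State : Type} (next : State -> bool -> State) (err : State -> bool -> bool).

Fixpoint errors (s : State) (w : list bool) : nat :=
  match w with
  | [] => 0
  | b :: w' => (if err s b then 1 else 0) + errors (next s b) w'
  end.

Fixpoint weight (p : R) (s : State) (w : list bool) : R :=
  match w with
  | [] => 1
  | b :: w' => (if err s b then p else 1 - p) * weight p (next s b) w'
  end.

Lemma errors_le_length s w : (errors s w <= length w)%nat.
Proof.
  revert s; induction w as [|b w IH]; intros s; cbn [errors length]; [lia|].
  specialize (IH (next s b)). destruct (err s b); lia.
Qed.

Lemma weight_eq_pow p s w :
  weight p s w = p ^ errors s w * (1 - p) ^ (length w - errors s w).
Proof.
  revert s; induction w as [|b w IH]; intros s; cbn [weight errors length]; [simpl; ring|].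
  rewrite IH. pose proof (errors_le_length (next s b) w).
  destruct (err s b).
  - simpl. ring.
  - rewrite Nat.add_0_l, Nat.sub_succ_l by exact H. simpl. ring.
Qed.

Lemma weight_nonneg p s w : 0 <= p <= 1 -> 0 <= weight p s w.
Proof.
  intros Hp. revert s; induction w as [|b w IH]; intros s; simpl; [lra|].
  apply Rmult_le_pos; [destruct (err s b); lra | apply IH].
Qed.

Hypothesis err_total : forall s, err s false = true \/ err s true = true.

Lemma sum_weight_le_1 p m s :
  0 <= p <= 1/2 -> sumR (map (weight p s) (bool_lists m)) <= 1.
Proof.
  intros Hp. revert s; induction m as [|m IH]; intros s; simpl; [unfold sumR; simpl; lra|].
  rewrite map_app, sumR_app, !map_map. cbn [weight].
  rewrite !sumR_map_scal.
  pose proof (IH (next s false)) as H0. pose proof (IH (next s true)) as H1.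
  pose proof (sumR_map_nonneg (weight p (next s false)) (bool_lists m)
                (fun w => weight_nonneg p _ w ltac:(lra))) as N0.
  pose proof (sumR_map_nonneg (weight p (next s true)) (bool_lists m)
                (fun w => weight_nonneg p _ w ltac:(lra))) as N1.
  destruct (err_total s) as [E|E]; rewrite E;
    [destruct (err s true) | destruct (err s false)]; nra.
Qed.

(* Double counting: each [w] has weight at least [c] from some [u], while for
   each [u] the weights of all [w] add up to at most 1. *)
Lemma weight_counting p c m K (init : list bool -> State) :
  0 <= p <= 1/2 ->
  (forall w, In w (bool_lists m) ->
     exists u, In u (bool_lists K) /\ c <= weight p (init u) w) ->
  2 ^ m * c <= 2 ^ K.
Proof.
  intros Hp Hcatch.
  replace (2 ^ m) with (INR (length (bool_lists m)))
    by (rewrite length_bool_lists, pow_INR; reflexivity).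
  replace (2 ^ K) with (INR (length (bool_lists K)) * 1)
    by (rewrite length_bool_lists, pow_INR, Rmult_1_r; reflexivity).
  rewrite <- !sumR_map_const.
  apply Rle_trans with
    (sumR (map (fun w => sumR (map (fun u => weight p (init u) w) (bool_lists K)))
               (bool_lists m))).
  - apply sumR_map_le. intros w Hw.
    destruct (Hcatch w Hw) as [u [Hu Hc]].
    apply Rle_trans with (weight p (init u) w); [exact Hc|].
    apply (sumR_map_ge_elem (fun u => weight p (init u) w)); [|exact Hu].
    intros y; apply weight_nonneg; lra.
  - rewrite (sumR_map_swap (fun w u => weight p (init u) w)).
    apply sumR_map_le. intros u _. apply sum_weight_le_1, Hp.
Qed.

End Weighting.

Lemma exp_le_compat x y : x <= y -> exp x <= exp y.
Proof. intros [H| ->]; [left; apply exp_increasing, H | right; reflexivity]. Qed.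

Lemma ln_le_compat x y : 0 < x -> x <= y -> ln x <= ln y.
Proof. intros Hx [H| ->]; [left; apply ln_increasing; assumption | right; reflexivity]. Qed.

(* [ln] of the right-hand side decreases in [E] (as [ln p <= ln (1 - p)]) and
   equals the exponent on the left at [E = p m]. *)
Lemma pow_entropy_lb (p : R) (m E : nat) :
  0 < p <= 1/2 -> (E <= m)%nat -> INR E <= p * INR m ->
  exp (INR m * (p * ln p + (1 - p) * ln (1 - p))) <= p ^ E * (1 - p) ^ (m - E).
Proof.
  intros Hp HEm HE.
  assert (Hq : 0 < 1 - p) by lra.
  rewrite <- (exp_ln (p ^ E * (1 - p) ^ (m - E)))
    by (apply Rmult_lt_0_compat; apply pow_lt; lra).
  apply exp_le_compat.
  rewrite ln_mult, !ln_pow, minus_INR by (lra || assumption || (apply pow_lt; lra)).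
  assert (Hl : ln p <= ln (1 - p)) by (apply ln_le_compat; lra).
  assert (0 <= (p * INR m - INR E) * (ln (1 - p) - ln p)) by (apply Rmult_le_pos; lra).
  nra.
Qed.

Lemma log2_counting_lb (p : R) (m K : nat) :
  0 < p < 1 ->
  2 ^ m * exp (INR m * (p * ln p + (1 - p) * ln (1 - p))) <= 2 ^ K ->
  INR m * (1 + p * log2 p + (1 - p) * log2 (1 - p)) <= INR K.
Proof.
  intros Hp H.
  assert (Hln2 : 0 < ln 2) by (pose proof ln_lt_2; lra).
  apply ln_le_compat in H; [|apply Rmult_lt_0_compat; [apply pow_lt; lra | apply exp_pos]].
  rewrite ln_mult, ln_exp, !ln_pow in H by (lra || apply pow_lt, Rlt_0_2 || apply exp_pos).
  unfold log2. apply (Rmult_le_reg_r (ln 2)); [exact Hln2|].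
  field_simplify; lra.
Qed.

Close Scope R_scope.

(** * Online strategies on a two-item list *)

Definition list_of_front (fr : bool) : list bool := [fr; negb fr].
Definition front (s : list bool) : bool := hd false s.

(* Serving [x] from [list_of_front fr], when the paid exchanges leave [t] in
   front, costs at least [step_cost_lb fr x t]; afterwards [front_after x t mv]
   is in front, where [mv] tells whether the free exchange moved [x] forward. *)
Definition step_cost_lb (fr x t : bool) : nat :=
  (if Bool.eqb t fr then 0 else 1) + (if Bool.eqb x t then 1 else 2).

Definition front_after (x t mv : bool) : bool := if mv then x else t.

Lemma paid_exchanges_list_of_front l fr : exists t,
  fold_left (fun s i => swap_at i s) l (list_of_front fr) = list_of_front t /\
  (if Bool.eqb t fr then 0 else 1) <= length l.
Proof.
  revert fr; induction l as [|[|i] l IH]; intros fr; cbn [fold_left length].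
  - exists fr. split; [reflexivity | destruct fr; simpl; lia].
  - replace (swap_at 0 (list_of_front fr)) with (list_of_front (negb fr))
      by (destruct fr; reflexivity).
    destruct (IH (negb fr)) as [t [E L]]. exists t. split; [exact E|].
    destruct t, fr; simpl in *; lia.
  - replace (swap_at (S i) (list_of_front fr)) with (list_of_front fr)
      by (destruct fr, i as [|[|i]]; reflexivity).
    destruct (IH fr) as [t [E L]]. exists t. split; [exact E | lia].
Qed.

Lemma serve_step_list_of_front fr a x : exists t mv,
  step_cost_lb fr x t <= fst (serve_step (list_of_front fr) a x) /\
  snd (serve_step (list_of_front fr) a x) = list_of_front (front_after x t mv).
Proof.
  unfold serve_step.
  destruct (paid_exchanges_list_of_front (paid a) fr) as [t [-> L]].
  exists t, (match free a with 0 => false | _ => true end).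
  destruct (free a); split; unfold step_cost_lb;
    destruct x, t, fr; simpl in *; (lia || reflexivity).
Qed.

Fixpoint run_cost (f : list bool -> action) (pre s sigma : list bool) : nat :=
  match sigma with
  | [] => 0
  | x :: r => fst (serve_step s (f (pre ++ [x])) x)
              + run_cost f (pre ++ [x]) (snd (serve_step s (f (pre ++ [x])) x)) r
  end.

Fixpoint run_state (f : list bool -> action) (pre s sigma : list bool) : list bool :=
  match sigma with
  | [] => s
  | x :: r => run_state f (pre ++ [x]) (snd (serve_step s (f (pre ++ [x])) x)) r
  end.

Lemma cost_run_cost sigma pre s f :
  cost s (map (fun i => f (pre ++ firstn (S i) sigma)) (seq 0 (length sigma))) sigma
  = run_cost f pre s sigma.
Proof.
  revert pre s; induction sigma as [|x r IH]; intros pre s; [reflexivity|].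
  cbn [length seq map]. rewrite <- seq_shift, map_map.
  cbn [cost hd tl run_cost firstn].
  destruct (serve_step s (f (pre ++ [x])) x) as [c s'].
  rewrite <- IH. do 2 f_equal.
  apply map_ext. intros i. now rewrite <- app_assoc.
Qed.

Lemma ALG_cost_run_cost alg t sigma :
  ALG_cost alg t sigma = run_cost (alg t) [] init_list sigma.
Proof. apply (cost_run_cost sigma []). Qed.

Lemma run_cost_app a b f pre s :
  run_cost f pre s (a ++ b)
  = run_cost f pre s a + run_cost f (pre ++ a) (run_state f pre s a) b.
Proof.
  revert pre s; induction a as [|x a IH]; intros pre s; cbn [run_cost run_state app].
  - now rewrite app_nil_r.
  - rewrite IH, <- app_assoc. simpl. lia.
Qed.

Lemma run_state_app a b f pre s :
  run_state f pre s (a ++ b) = run_state f (pre ++ a) (run_state f pre s a) b.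
Proof.
  revert pre s; induction a as [|x a IH]; intros pre s; cbn [run_state app].
  - now rewrite app_nil_r.
  - now rewrite IH, <- app_assoc.
Qed.

Lemma run_state_list_of_front r f pre fr :
  run_state f pre (list_of_front fr) r
  = list_of_front (front (run_state f pre (list_of_front fr) r)).
Proof.
  revert pre fr; induction r as [|x r IH]; intros pre fr; [reflexivity|].
  cbn [run_state].
  destruct (serve_step_list_of_front fr (f (pre ++ [x])) x) as [t [mv [_ ->]]].
  apply IH.
Qed.

(* The potential charges the list [false; true]: every block below starts with
   a request to [true]. *)
Definition potential (fr : bool) : nat := if fr then 0 else 1.

Definition amortized f pre s r : nat :=
  run_cost f pre s r + potential (front (run_state f pre s r)).

Lemma amortized_app a b f pre s :
  amortized f pre s (a ++ b)
  = run_cost f pre s a + amortized f (pre ++ a) (run_state f pre s a) b.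
Proof. unfold amortized. rewrite run_cost_app, run_state_app. lia. Qed.

Definition min_bool2 (g : bool -> bool -> nat) : nat :=
  Nat.min (Nat.min (g false false) (g false true))
          (Nat.min (g true false) (g true true)).

(* The optimum in the relaxed cost model of [serve_step_list_of_front]; it
   does not depend on the strategy, so it can be evaluated. *)
Fixpoint min_amortized (fr : bool) (r : list bool) : nat :=
  match r with
  | [] => potential fr
  | x :: r' =>
      min_bool2 (fun t mv => step_cost_lb fr x t + min_amortized (front_after x t mv) r')
  end.

Lemma amortized_cons_ge f pre fr x r : exists t mv,
  step_cost_lb fr x t + amortized f (pre ++ [x]) (list_of_front (front_after x t mv)) r
  <= amortized f pre (list_of_front fr) (x :: r).
Proof.
  destruct (serve_step_list_of_front fr (f (pre ++ [x])) x) as [t [mv [Hc Hs]]].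
  exists t, mv. unfold amortized in *. cbn [run_cost run_state]. rewrite Hs. lia.
Qed.

Lemma min_amortized_le r f pre fr :
  min_amortized fr r <= amortized f pre (list_of_front fr) r.
Proof.
  revert pre fr; induction r as [|x r IH]; intros pre fr; [reflexivity|].
  destruct (amortized_cons_ge f pre fr x r) as [t [mv H]].
  specialize (IH (pre ++ [x]) (front_after x t mv)).
  cbn [min_amortized]. unfold min_bool2. destruct t, mv; lia.
Qed.

(** * The block adversary *)

Definition block (b : bool) : list bool :=
  if b then [true; true; true; false; false] else [true; false; false; true; false].

Definition blocks (w : list bool) : list bool := concat (map block w).

Lemma length_blocks w : length (blocks w) = 5 * length w.
Proof.
  unfold blocks. induction w as [|b w IH]; [reflexivity|].
  cbn [map concat length]. rewrite length_app, IH. destruct b; simpl; lia.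
Qed.

Lemma block_first_request f pre fr : exists t mv, forall b,
  step_cost_lb fr true t + min_amortized (front_after true t mv) (tl (block b))
  <= amortized f pre (list_of_front fr) (block b).
Proof.
  destruct (serve_step_list_of_front fr (f (pre ++ [true])) true) as [t [mv [Hc Hs]]].
  exists t, mv. intros b.
  pose proof (min_amortized_le (tl (block b)) f (pre ++ [true]) (front_after true t mv)).
  set (r := tl (block b)) in *.
  replace (block b) with (true :: r) by (destruct b; reflexivity).
  unfold amortized in *. cbn [run_cost run_state]. rewrite Hs. lia.
Qed.

Lemma min_amortized_tl_block fr b :
  min_amortized fr (tl (block b)) = if Bool.eqb fr b then 6 else 7.
Proof. destruct fr, b; reflexivity. Qed.

Lemma amortized_block_ge_7 f pre fr b :
  7 + potential fr <= amortized f pre (list_of_front fr) (block b).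
Proof.
  destruct (block_first_request f pre fr) as [t [mv H]].
  specialize (H b). rewrite min_amortized_tl_block in H.
  destruct fr, t, mv, b; simpl in *; lia.
Qed.

Lemma amortized_block_ge_8 f pre fr : exists b,
  8 + potential fr <= amortized f pre (list_of_front fr) (block b).
Proof.
  destruct (block_first_request f pre fr) as [t [mv H]].
  pose proof (H false) as H0. pose proof (H true) as H1.
  rewrite min_amortized_tl_block in H0, H1.
  exists (negb (front_after true t mv)).
  destruct fr, t, mv; simpl in *; lia.
Qed.

Record config := Config {
  strategy : list bool -> action;
  prefix : list bool;
  cur_front : bool
}.

Definition config_amortized (c : config) (b : bool) : nat :=
  amortized (strategy c) (prefix c) (list_of_front (cur_front c)) (block b).

Definition block_next (c : config) (b : bool) : config :=
  Config (strategy c) (prefix c ++ block b)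
    (front (run_state (strategy c) (prefix c) (list_of_front (cur_front c)) (block b))).

Definition block_err (c : config) (b : bool) : bool :=
  Nat.leb (8 + potential (cur_front c)) (config_amortized c b).

Lemma block_err_total c : block_err c false = true \/ block_err c true = true.
Proof.
  destruct (amortized_block_ge_8 (strategy c) (prefix c) (cur_front c)) as [[|] H];
    [right | left]; apply Nat.leb_le, H.
Qed.

Lemma amortized_blocks_ge w c :
  7 * length w + errors block_next block_err c w + potential (cur_front c)
  <= amortized (strategy c) (prefix c) (list_of_front (cur_front c)) (blocks w).
Proof.
  revert c; induction w as [|b w IH]; intros c; [apply Nat.le_refl|].
  unfold blocks; cbn [map concat length errors]; fold (blocks w).
  rewrite amortized_app, run_state_list_of_front.
  specialize (IH (block_next c b)).
  pose proof (amortized_block_ge_7 (strategy c) (prefix c) (cur_front c) b) as H7.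
  unfold block_err at 1.
  destruct (Nat.leb_spec (8 + potential (cur_front c)) (config_amortized c b)) as [H8|H8];
    unfold config_amortized, amortized in H7, H8; simpl in IH |- *; lia.
Qed.

(* Serve [block false] without moving anything, and [block true] by moving the
   first and the fourth request to the front: 7 per block, back to [init_list]. *)
Definition block_actions (b : bool) : list action :=
  if b then [mkAction [] 1; no_action; no_action; mkAction [] 1; no_action]
  else repeat no_action 5.

Lemma OPT_le_cost s sigma acts : OPT s sigma <= cost s acts sigma.
Proof.
  unfold OPT. destruct (constructive_indefinite_description _ _) as [c Hc].
  apply (proj2 Hc). now exists acts.
Qed.

Lemma OPT_blocks_le w : OPT init_list (blocks w) <= 7 * length w.
Proof.
  rewrite (OPT_le_cost _ _ (concat (map block_actions w))).
  unfold blocks. induction w as [|b w IH]; [reflexivity|].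
  cbn [map concat length].
  replace (cost init_list (block_actions b ++ concat (map block_actions w))
                (block b ++ concat (map block w)))
    with (7 + cost init_list (concat (map block_actions w)) (concat (map block w)))
    by (destruct b; reflexivity).
  lia.
Qed.

Lemma competitive_errors_bound (alg : online_alg) t (gamma : R) w :
  (0 <= gamma)%R ->
  (INR (ALG_cost alg t (blocks w)) <= gamma * INR (OPT init_list (blocks w)))%R ->
  (INR (errors block_next block_err (Config (alg t) [] false) w)
   <= (7 * gamma - 7) * INR (length w))%R.
Proof.
  intros Hg Hcomp.
  pose proof (amortized_blocks_ge w (Config (alg t) [] false)) as Hlb; simpl in Hlb.
  assert (Hcost : amortized (alg t) [] init_list (blocks w) <= ALG_cost alg t (blocks w) + 1).
  { rewrite ALG_cost_run_cost. unfold amortized, potential. destruct (front _); lia. }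
  change init_list with (list_of_front false) in Hcost.
  assert (Hle : 7 * length w + errors block_next block_err (Config (alg t) [] false) w
                <= ALG_cost alg t (blocks w)) by lia.
  apply le_INR in Hle. rewrite plus_INR, mult_INR in Hle.
  pose proof (le_INR _ _ (OPT_blocks_le w)) as Hopt. rewrite mult_INR in Hopt.
  simpl (INR 7) in *. nra.
Qed.

Definition tape_of (u : list bool) : tape := fun i => nth i u false.

Lemma reads_at_most_mono alg t sigma k k' :
  k <= k' -> reads_at_most alg t sigma k -> reads_at_most alg t sigma k'.
Proof. intros Hk Hr t' Ht'. apply Hr. intros i Hi. apply Ht'. lia. Qed.

Lemma ALG_cost_advice_prefix alg t sigma k :
  reads_at_most alg t sigma k ->
  ALG_cost alg (tape_of (map t (seq 0 k))) sigma = ALG_cost alg t sigma.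
Proof.
  intros Hr. unfold ALG_cost. rewrite Hr; [reflexivity|].
  intros i Hi. unfold tape_of.
  rewrite (nth_indep _ false (t 0)) by (rewrite length_map, length_seq; exact Hi).
  now rewrite map_nth, seq_nth.
Qed.

Theorem theorem2 (gamma : R) (Hg1 : (1 < gamma)%R) (Hg2 : (gamma <= 15 / 14)%R)
  (alg : online_alg) (adv : list bool -> tape)
  (Hcomp : forall sigma : list bool,
      (INR (ALG_cost alg (adv sigma) sigma) <= gamma * INR (OPT init_list sigma))%R)
  (n : nat) (Hn : Nat.modulo n 5 = 0) :
  exists sigma : list bool, length sigma = n /\
    forall k : nat, reads_at_most alg (adv sigma) sigma k ->
      (INR n / 5 * (1 + (7 * gamma - 7) * log2 (7 * gamma - 7)
                      + (8 - 7 * gamma) * log2 (8 - 7 * gamma)) <= INR k)%R.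
Proof.
  set (m := n / 5). set (p := (7 * gamma - 7)%R).
  assert (Hnm : n = 5 * m) by (apply Nat.Div0.div_exact, Hn).
  replace (INR n / 5)%R with (INR m) by (rewrite Hnm, mult_INR; simpl; field).
  replace (8 - 7 * gamma)%R with (1 - p)%R by (unfold p; ring).
  set (B := (INR m * (1 + p * log2 p + (1 - p) * log2 (1 - p)))%R).
  destruct (classic (exists w, In w (bool_lists m) /\
     forall k, reads_at_most alg (adv (blocks w)) (blocks w) k -> (B <= INR k)%R))
    as [[w [Hw HB]] | Hsmall].
  { exists (blocks w). rewrite length_blocks, (in_bool_lists_length m w Hw). auto. }
  exfalso.
  destruct (uniform_bound (fun w k => reads_at_most alg (adv (blocks w)) (blocks w) k)
              B (bool_lists m) (bool_lists_nonnil m))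
    as [K [HKB HK]].
  { intros w k k'. apply reads_at_most_mono. }
  { intros w Hw. apply NNPP. intros Hnone. apply Hsmall. exists w. split; [exact Hw|].
    intros k Hk. apply Rnot_lt_le. intros HkB. apply Hnone. now exists k. }
  apply (Rlt_not_le _ _ HKB), log2_counting_lb; [unfold p; lra|].
  apply (weight_counting block_next block_err block_err_total p _ m K
           (fun u => Config (alg (tape_of u)) [] false)); [unfold p; lra|].
  intros w Hw. pose proof (in_bool_lists_length m w Hw) as Hlen.
  exists (map (adv (blocks w)) (seq 0 K)). split.
  { apply bool_lists_complete. now rewrite length_map, length_seq. }
  rewrite weight_eq_pow, Hlen.
  apply pow_entropy_lb; [unfold p; lra | rewrite <- Hlen; apply errors_le_length |].
  rewrite <- Hlen. apply competitive_errors_bound; [lra|].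
  rewrite ALG_cost_advice_prefix by (apply HK, Hw). apply Hcomp.
Qed.
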